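(* Let $G$, $A$, $H$, $\beta$, $G_\beta$, $(K,v)$, $\sigma$, $\delta$ be as in the context. Then the map $val:K(t^H,\beta)_\delta\to G_\beta\cup\{\infty\}$ given by $val\left(\sum_{h\in S}a_ht^h\right)=(v(a_{h_0}),h_0)$, where $h_0$ is the least element of the support $S$ (with $a_{h_0}\neq 0$), and $val(0)=\infty$ (a symbol greater than every element of $G_\beta$), is a valuation on the field $K(t^H,\beta)_\delta$.
   Context: $G$ is an ordered abelian group with smallest nonzero convex subgroup $A$, $H=G/A$ with the induced order, $\rho:G\to H$ the projection; $\alpha:H\to G$ is a transversal map ($\rho\alpha=\mathrm{id}_H$, $\alpha(0)=0$) and $\beta(h,h')=\alpha(h+h')-\alpha(h)-\alpha(h')\in A$. $G_\beta$ is $A\times H$ with $(z,h)+(z',h')=(z+z'-\beta(h,h'),h+h')$ and lexicographic order ($(z,h)\le(z',h')$ iff $h<h'$, or $h=h'$ and $z\le z'$); it is an ordered abelian group. $(K,v)$ is a valued field of characteristic $0$, residue characteristic $p$, value group $A$, with cross-section $\sigma:A\to K^\times$ (homomorphism, $v(\sigma(a))=a$). $\delta$ is an infinite cardinal and $K(t^H,\beta)_\delta$ is the field of formal sums $\sum_{h\in S}a_ht^h$, $S\subseteq H$ well ordered, $|S|\le\delta$, $a_h\in K$, with coefficientwise addition and multiplication $\left(\sum a_ht^h\right)\left(\sum b_ht^h\right)=\sum_l\left(\sum_{h+h'=l}a_hb_{h'}\sigma(-\beta(h,h'))\right)t^l$. *)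

From HB Require Import structures.
From mathcomp Require Import all_boot all_order all_algebra.
From mathcomp Require Import boolp classical_sets fsbigop.
From Stdlib Require Import ClassicalEpsilon.

Set Implicit Arguments.
Unset Strict Implicit.
Unset Printing Implicit Defensive.
Import Order.TTheory GRing.Theory Num.Theory.
Local Open Scope ring_scope.

Definition ordered_abelian_group (G : zmodType) (le : rel G) : Prop :=
  [/\ reflexive le, antisymmetric le, transitive le, total le &
      forall x y z : G, le x y -> le (x + z) (y + z)].

Definition is_subgroup (G : zmodType) (B : pred G) : Prop :=
  B 0 /\ forall x y, B x -> B y -> B (x - y).

Definition is_convex (G : zmodType) (le : rel G) (B : pred G) : Prop :=
  forall x y z, B x -> B z -> le x y -> le y z -> B y.

Definition nonzero_convex_subgroup (G : zmodType) (le : rel G) (B : pred G) :=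
  [/\ is_subgroup B, is_convex le B & exists x, B x /\ x <> 0].

Definition smallest_nonzero_convex_subgroup (G : zmodType) (le : rel G)
  (A : pred G) : Prop :=
  nonzero_convex_subgroup le A /\
  forall B : pred G, nonzero_convex_subgroup le B -> forall x, A x -> B x.

(* rho : G -> H is the projection onto the quotient H = G/A (H is given up to
   isomorphism: a surjective group morphism with kernel exactly A). *)
Definition quotient_proj (G H : zmodType) (A : pred G) (rho : G -> H) :=
  [/\ forall x y, rho (x - y) = rho x - rho y,
      forall h, exists g, rho g = h &
      forall g, rho g = 0 <-> A g].

Definition induced_le (G H : zmodType) (leG : rel G) (rho : G -> H)
  (h h' : H) : Prop :=
  exists g g', [/\ rho g = h, rho g' = h' & leG g g'].

Definition transversal_map (G H : zmodType) (rho : G -> H) (alpha : H -> G) :=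
  (forall h, rho (alpha h) = h) /\ alpha 0 = 0.

Definition cocycle (G H : zmodType) (alpha : H -> G) (h h' : H) : G :=
  alpha (h + h') - alpha h - alpha h'.

Definition Gbeta_add (G H : zmodType) (beta : H -> H -> G)
  (x y : G * H) : G * H :=
  (x.1 + y.1 - beta x.2 y.2, x.2 + y.2).

Definition Gbeta_le (G H : zmodType) (leG : rel G) (leH : H -> H -> Prop)
  (x y : G * H) : Prop :=
  (leH x.2 y.2 /\ x.2 <> y.2) \/ (x.2 = y.2 /\ leG x.1 y.1).

Definition oadd (T : Type) (add : T -> T -> T) (a b : option T) : option T :=
  match a, b with Some x, Some y => Some (add x y) | _, _ => None end.

(* None plays the role of oo, greater than everything *)
Definition ole (T : Type) (le : T -> T -> Prop) (a b : option T) : Prop :=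
  match a, b with
  | _, None => True
  | None, Some _ => False
  | Some x, Some y => le x y
  end.

Definition valuation_on (T Gamma : Type) (S : T -> Prop) (zero : T)
  (add mul : T -> T -> T) (addG : Gamma -> Gamma -> Gamma)
  (leG : Gamma -> Gamma -> Prop) (w : T -> option Gamma) : Prop :=
  [/\ forall x, S x -> (w x = None <-> x = zero),
      forall x y, S x -> S y -> w (mul x y) = oadd addG (w x) (w y) &
      forall x y, S x -> S y ->
        ole leG (w x) (w (add x y)) \/ ole leG (w y) (w (add x y))].

Definition valued_field_with_value_group (G : zmodType) (leG : rel G)
  (A : pred G) (K : fieldType) (v : K -> option G) : Prop :=
  [/\ valuation_on (fun _ : K => True) 0 +%R *%R +%R (fun x y => leG x y) v,
      forall x : K, x <> 0 -> exists2 a, A a & v x = Some a &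
      forall a, A a -> exists x : K, v x = Some a].

Definition char0 (K : fieldType) : Prop :=
  forall n : nat, (n%:R == 0 :> K) = (n == 0)%N.

(* residue field has characteristic p: n.1 lies in the maximal ideal
   (v(n.1) > 0, including oo) iff p divides n *)
Definition residue_char (G : zmodType) (leG : rel G) (K : fieldType)
  (v : K -> option G) (p : nat) : Prop :=
  forall n : nat, (p %| n)%N <->
    match v (n%:R) with None => True | Some z => leG 0 z /\ z <> 0 end.

Definition cross_section (G : zmodType) (A : pred G) (K : fieldType)
  (v : K -> option G) (sigma : G -> K) : Prop :=
  (forall a b, A a -> A b -> sigma (a + b) = sigma a * sigma b) /\
  (forall a, A a -> v (sigma a) = Some a).

(* the cardinal delta is represented by a type D; it is infinite *)
Definition infinite_type (D : Type) : Prop :=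
  exists f : nat -> D, injective f.

Definition support (H : Type) (K : fieldType) (f : H -> K) : H -> Prop :=
  fun h => f h <> 0.

Definition well_ordered_subset (H : Type) (leH : H -> H -> Prop)
  (S : H -> Prop) : Prop :=
  forall P : H -> Prop, (exists h, P h) -> (forall h, P h -> S h) ->
    exists m, P m /\ forall h, P h -> leH m h.

Definition card_le (H : Type) (S : H -> Prop) (D : Type) : Prop :=
  exists f : {h : H | S h} -> D, injective f.

(* f = sum_h f(h) t^h is an element of K(t^H, beta)_delta *)
Definition in_hahn (H : Type) (K : fieldType) (leH : H -> H -> Prop)
  (D : Type) (f : H -> K) : Prop :=
  well_ordered_subset leH (support f) /\ card_le (support f) D.

Definition hahn_zero (H : Type) (K : fieldType) : H -> K := fun _ => 0.

Definition hahn_add (H : Type) (K : fieldType) (f g : H -> K) : H -> K :=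
  fun h => f h + g h.

Definition hahn_mul (G H : zmodType) (K : fieldType) (beta : H -> H -> G)
  (sigma : G -> K) (f g : H -> K) : H -> K :=
  fun l => (\sum_(h \in [set: H]) f h * g (l - h) * sigma (- beta h (l - h)))%R.

(* the least element of the support (arbitrary if f = 0) *)
Definition lead_exp (H : zmodType) (K : fieldType) (leH : H -> H -> Prop)
  (f : H -> K) : H :=
  epsilon (inhabits 0) (fun h0 => f h0 <> 0 /\ forall h, f h <> 0 -> leH h0 h).

Definition hahn_val (G H : zmodType) (K : fieldType) (leH : H -> H -> Prop)
  (v : K -> option G) (f : H -> K) : option (G * H) :=
  let h0 := lead_exp leH f in
  omap (fun z => (z, h0)) (v (f h0)).

From Pilot Require Import Defs.
From HB Require Import structures.
From mathcomp Require Import all_boot all_order all_algebra.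
From mathcomp Require Import boolp classical_sets fsbigop.
From Stdlib Require Import ClassicalEpsilon.

(* Convexity of A makes the order of G descend to a total order on H = G/A
   compatible with addition.  If f, g have least exponents h0, k0, the only
   nonzero term of f g at h0 + k0 is f(h0) g(k0) sigma(-beta(h0, k0)) and no
   smaller exponent occurs; as sigma(-beta(h0, k0)) has value -beta(h0, k0),
   the valuation of f g is (v(f h0), h0) + (v(g k0), k0) in G_beta.  The least
   exponent of f + g is at least min(h0, k0), and when h0 = k0 is still the
   least one, the ultrametric inequality of v applies. *)

Set Implicit Arguments.
Unset Strict Implicit.
Unset Printing Implicit Defensive.
Import Order.TTheory GRing.Theory Num.Theory.
Local Open Scope ring_scope.

Definition ordered_abelian_group_prop (H : zmodType) (le : H -> H -> Prop)
    : Prop :=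
  [/\ forall a, le a a,
      forall a b, le a b -> le b a -> a = b,
      forall a b c, le a b -> le b c -> le a c,
      forall a b, le a b \/ le b a &
      forall a b c, le a b -> le (a + c) (b + c)].

Section InducedOrder.

Variables (G H : zmodType) (leG : rel G) (A : pred G) (rho : G -> H).
Hypotheses (ordG : ordered_abelian_group leG) (A0 : A 0)
  (convexA : is_convex leG A) (rhoA : quotient_proj A rho).

Lemma quotient_projD x y : rho (x + y) = rho x + rho y.
Proof.
have [rhoB _ _] := rhoA.
have rho0 : rho 0 = 0 by rewrite -(subrr (0 : G)) rhoB subrr.
have rhoN z : rho (- z) = - rho z by rewrite -sub0r rhoB rho0 sub0r.
by have := rhoB x (- y); rewrite opprK rhoN opprK.
Qed.

Lemma induced_le_anti a b :
  induced_le leG rho a b -> induced_le leG rho b a -> a = b.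
Proof.
move=> [x [x' [<- <- lexx']]] [y' [y [ey' ey le_y'y]]].
have [_ _ _ _ leD] := ordG.
have [rhoB _ rho0] := rhoA.
have ge0_x : leG 0 (x' - x) by rewrite -(subrr x); apply: leD.
have ge0_y : leG 0 (y - y') by rewrite -(subrr y'); apply: leD.
have le_sum : leG (x' - x) ((x' - x) + (y - y')).
  by rewrite [X in leG _ X]addrC -{1}[x' - x]add0r; apply: leD.
have A_sum : A ((x' - x) + (y - y')).
  by apply/rho0; rewrite quotient_projD !rhoB ey ey' addrA subrK subrr.
have /rho0 : A (x' - x) := convexA A0 A_sum ge0_x le_sum.
by rewrite rhoB => /eqP; rewrite subr_eq0 => /eqP.
Qed.

Lemma induced_le_ordered : ordered_abelian_group_prop (induced_le leG rho).
Proof.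
have [le_refl _ leT le_total leD] := ordG.
have [_ rho_onto _] := rhoA.
have lifts_strict a b x y : induced_le leG rho a b -> a <> b ->
    rho x = a -> rho y = b -> leG x y.
  move=> le_ab neq_ab ex ey; case/orP: (le_total x y) => // le_yx.
  by case: neq_ab; apply: induced_le_anti => //; exists y, x; split.
split.
- by move=> a; have [x ex] := rho_onto a; exists x, x; split; last apply: le_refl.
- exact: induced_le_anti.
- move=> a b c le_ab le_bc.
  have [->|neq_ab] := eqVneq a b; first by [].
  have [eq_bc|neq_bc] := eqVneq b c; first by rewrite -eq_bc.
  have [x ex] := rho_onto a; have [y ey] := rho_onto b; have [z ez] := rho_onto c.
  exists x, z; split => //; apply: (leT y).
  + by apply: (lifts_strict a b) => //; apply/eqP.
  + by apply: (lifts_strict b c) => //; apply/eqP.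
- move=> a b; have [x ex] := rho_onto a; have [y ey] := rho_onto b.
  by case/orP: (le_total x y) => le_xy; [left; exists x, y | right; exists y, x].
- move=> a b c [x [y [ex ey le_xy]]]; have [z ez] := rho_onto c.
  exists (x + z), (y + z).
  by rewrite !quotient_projD ex ey ez; split => //; apply: leD.
Qed.

End InducedOrder.

Lemma cocycle_in_kernel (G H : zmodType) (A : pred G) (rho : G -> H)
    (alpha : H -> G) h h' :
  quotient_proj A rho -> transversal_map rho alpha -> A (cocycle alpha h h').
Proof.
move=> [rhoB _ rho0] [rho_alpha _]; apply/rho0.
by rewrite /cocycle !rhoB !rho_alpha addrAC addrK subrr.
Qed.

Section HahnSeries.

Variables (H : zmodType) (leH : H -> H -> Prop) (K : fieldType).
Hypothesis ordH : ordered_abelian_group_prop leH.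
Implicit Types (f g : H -> K) (h l : H).

Definition least_exp (f : H -> K) (h0 : H) :=
  f h0 <> 0 /\ forall h, f h <> 0 -> leH h0 h.

Lemma lead_exp_eq f (h0 : H) : least_exp f h0 -> lead_exp leH f = h0.
Proof.
have [_ anti _ _ _] := ordH.
move=> [fh0 h0_min]; have [fl l_min] := epsilon_spec (inhabits 0) _
  (ex_intro (fun h1 => least_exp f h1) h0 (conj fh0 h0_min)).
by apply: anti; [apply: l_min | apply: h0_min].
Qed.

Lemma well_ordered_support_cases f : well_ordered_subset leH (Defs.support f) ->
  f = @hahn_zero H K \/ exists h0, least_exp f h0.
Proof.
move=> wo_f; have [[h fh]|all0] := pselect (exists h, f h <> 0).
  have [m [fm m_min]] := wo_f _ (ex_intro _ h fh) (fun _ x => x).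
  by right; exists m.
left; apply: funext => h; apply: contrapT => fh.
by apply: all0; exists h.
Qed.

Lemma well_ordered_subsetU (S1 S2 : H -> Prop) :
  well_ordered_subset leH S1 -> well_ordered_subset leH S2 ->
  well_ordered_subset leH (fun h => S1 h \/ S2 h).
Proof.
have [_ _ leT le_total _] := ordH.
move=> wo1 wo2 P [h Ph] P_sub.
have least_in (S : H -> Prop) : well_ordered_subset leH S ->
    (exists h, P h /\ S h) ->
    exists m, P m /\ forall h, P h -> S h -> leH m h.
  move=> woS nePS; have [m [[Pm _] m_min]] := woS _ nePS (fun _ x => x.2).
  by exists m; split => // x Px Sx; apply: m_min.
have [ne1|e1] := pselect (exists h, P h /\ S1 h);
have [ne2|e2] := pselect (exists h, P h /\ S2 h).
- have [m1 [Pm1 min1]] := least_in _ wo1 ne1.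
  have [m2 [Pm2 min2]] := least_in _ wo2 ne2.
  case: (le_total m1 m2) => [le_m12|le_m21].
  + exists m1; split => // x Px; case: (P_sub x Px) => Sx; first exact: min1.
    exact: leT le_m12 (min2 x Px Sx).
  + exists m2; split => // x Px; case: (P_sub x Px) => Sx; last exact: min2.
    exact: leT le_m21 (min1 x Px Sx).
- have [m1 [Pm1 min1]] := least_in _ wo1 ne1.
  exists m1; split => // x Px; case: (P_sub x Px) => Sx; first exact: min1.
  by case: e2; exists x.
- have [m2 [Pm2 min2]] := least_in _ wo2 ne2.
  exists m2; split => // x Px; case: (P_sub x Px) => Sx; last exact: min2.
  by case: e1; exists x.
- by case: (P_sub h Ph) => Sh; [case: e1 | case: e2]; exists h.
Qed.

Lemma well_ordered_support_add f g :
  well_ordered_subset leH (Defs.support f) ->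
  well_ordered_subset leH (Defs.support g) ->
  well_ordered_subset leH (Defs.support (hahn_add f g)).
Proof.
move=> wo_f wo_g P neP P_sub.
apply: (well_ordered_subsetU wo_f wo_g) neP _ => h /P_sub.
rewrite /Defs.support /hahn_add => fgh.
have [fh0|/eqP] := eqVneq (f h) 0; last by left.
by right => gh0; apply: fgh; rewrite fh0 gh0 addr0.
Qed.

Lemma hahn_addC f g : hahn_add f g = hahn_add g f.
Proof. by apply: funext => h; rewrite /hahn_add addrC. Qed.

Lemma hahn_add0f g : hahn_add (@hahn_zero H K) g = g.
Proof. by apply: funext => h; rewrite /hahn_add add0r. Qed.

Section Product.

Variables (G : zmodType) (beta : H -> H -> G) (sigma : G -> K).

Lemma hahn_mul0f g : hahn_mul beta sigma (@hahn_zero H K) g = @hahn_zero H K.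
Proof. by apply: funext => l; apply: fsbig1 => h _; rewrite !mul0r. Qed.

Lemma hahn_mulf0 f : hahn_mul beta sigma f (@hahn_zero H K) = @hahn_zero H K.
Proof. by apply: funext => l; apply: fsbig1 => h _; rewrite mulr0 mul0r. Qed.

Variables (f g : H -> K) (h0 k0 : H).
Hypotheses (f_h0 : least_exp f h0) (g_k0 : least_exp g k0).

Let term l h := f h * g (l - h) * sigma (- beta h (l - h)).

Lemma term_exps l h : term l h <> 0 -> leH h0 h /\ leH k0 (l - h).
Proof.
move=> t_neq0; split.
- by apply: f_h0.2 => fh; apply: t_neq0; rewrite /term fh !mul0r.
- by apply: g_k0.2 => gh; apply: t_neq0; rewrite /term gh mulr0 mul0r.
Qed.

Lemma hahn_mul_lead_coef :
  hahn_mul beta sigma f g (h0 + k0) = f h0 * g k0 * sigma (- beta h0 k0).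
Proof.
have [_ anti _ _ leD] := ordH.
rewrite /hahn_mul -(fsbig_widen [set h0] setT) //.
  by rewrite fsbig_set1 (addrC h0 k0) addrK.
move=> h [_ /= neq_h]; apply: contrapT => /term_exps [le_h0h le_k0].
apply: neq_h; apply: anti _ le_h0h.
by have := leD _ _ (h - k0) le_k0; rewrite addrC subrK addrA subrK addrK.
Qed.

Lemma hahn_mul_support_ge l :
  hahn_mul beta sigma f g l <> 0 -> leH (h0 + k0) l.
Proof.
have [_ _ leT _ leD] := ordH.
move=> fg_l.
have [[h /term_exps [le_h0h le_k0]]|all0] := pselect (exists h, term l h <> 0).
  apply: (leT _ (h + k0)); first exact: leD.
  by have := leD _ _ h le_k0; rewrite subrK addrC.
case: fg_l; apply: fsbig1 => h _; apply: contrapT => t_neq0.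
by apply: all0; exists h.
Qed.

End Product.

Section Valuation.

Variables (G : zmodType) (leG : rel G) (v : K -> option G).

Lemma hahn_val_lead f (h0 : H) : least_exp f h0 ->
  hahn_val leH v f = omap (fun z => (z, h0)) (v (f h0)).
Proof. by move=> /lead_exp_eq; rewrite /hahn_val => ->. Qed.

Hypothesis v_val :
  valuation_on (fun _ : K => True) 0 +%R *%R +%R (fun x y => leG x y) v.

Lemma valuation_eq0 x : v x = None <-> x = 0.
Proof. by have [v0 _ _] := v_val; apply: v0. Qed.

Lemma hahn_val_zero : hahn_val leH v (@hahn_zero H K) = None.
Proof. by have /valuation_eq0 v0 : (0 : K) = 0 by []; rewrite /hahn_val v0. Qed.

Lemma hahn_val_eq_None f : well_ordered_subset leH (Defs.support f) ->
  hahn_val leH v f = None <-> f = @hahn_zero H K.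
Proof.
case/well_ordered_support_cases => [->|[h0 f_h0]]; first by rewrite hahn_val_zero.
rewrite (hahn_val_lead f_h0); split => [|f0]; last by case: f_h0.1; rewrite f0.
by case E: (v (f h0)) => //= _; case: f_h0.1; apply/valuation_eq0.
Qed.

Lemma hahn_val_mul (A : pred G) (beta : H -> H -> G) (sigma : G -> K) f g :
  is_subgroup A -> (forall h h', A (beta h h')) -> cross_section A v sigma ->
  well_ordered_subset leH (Defs.support f) ->
  well_ordered_subset leH (Defs.support g) ->
  hahn_val leH v (hahn_mul beta sigma f g) =
    oadd (Gbeta_add beta) (hahn_val leH v f) (hahn_val leH v g).
Proof.
move=> [A0 AB] A_beta [_ v_sigma] /well_ordered_support_cases[->|[h0 f_h0]].
  by rewrite hahn_mul0f hahn_val_zero.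
case/well_ordered_support_cases => [->|[k0 g_k0]].
  by rewrite hahn_mulf0 hahn_val_zero; case: (hahn_val _ _ f).
have [_ v_mul _] := v_val.
have v_sigma_beta : v (sigma (- beta h0 k0)) = Some (- beta h0 k0).
  by apply: v_sigma; rewrite -sub0r; apply: AB.
have sigma_neq0 : sigma (- beta h0 k0) <> 0.
  by move/valuation_eq0; rewrite v_sigma_beta.
have fg_lead : least_exp (hahn_mul beta sigma f g) (h0 + k0).
  split; last exact: hahn_mul_support_ge.
  rewrite hahn_mul_lead_coef //; apply/eqP.
  by rewrite !mulf_neq0 //; apply/eqP; [apply: f_h0.1 | apply: g_k0.1 | ].
rewrite (hahn_val_lead fg_lead) (hahn_val_lead f_h0) (hahn_val_lead g_k0).
rewrite hahn_mul_lead_coef // !v_mul // v_sigma_beta.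
by case: (v (f h0)); case: (v (g k0)).
Qed.

Hypothesis leG_refl : reflexive leG.

Lemma ole_refl (a : option (G * H)) : ole (Gbeta_le leG leH) a a.
Proof. by case: a => //= x; right. Qed.

Lemma ole_same_exp (a b : option G) h :
  ole (fun x y => leG x y) a b ->
  ole (Gbeta_le leG leH) (omap (fun z => (z, h)) a) (omap (fun z => (z, h)) b).
Proof. by case: a; case: b => //= x y l; right. Qed.

Lemma hahn_val_add_lead_le f g (h0 k0 : H) :
  well_ordered_subset leH (Defs.support f) ->
  well_ordered_subset leH (Defs.support g) ->
  least_exp f h0 -> least_exp g k0 -> leH h0 k0 ->
  ole (Gbeta_le leG leH) (hahn_val leH v f) (hahn_val leH v (hahn_add f g)) \/
  ole (Gbeta_le leG leH) (hahn_val leH v g) (hahn_val leH v (hahn_add f g)).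
Proof.
have [_ anti leT _ _] := ordH.
move=> wo_f wo_g f_h0 g_k0 le_h0k0.
have [->|[m s_m]] :=
  well_ordered_support_cases (well_ordered_support_add wo_f wo_g).
  by left; rewrite hahn_val_zero; case: (hahn_val _ _ f).
have le_h0m : leH h0 m.
  have [fm0|/eqP] := eqVneq (f m) 0; last exact: f_h0.2.
  apply: leT le_h0k0 _; apply: g_k0.2 => gm0.
  by apply: s_m.1; rewrite /hahn_add fm0 gm0 addr0.
rewrite (hahn_val_lead s_m) (hahn_val_lead f_h0) (hahn_val_lead g_k0).
have [eq_h0m|neq_h0m] := eqVneq h0 m; last first.
  left; case E: (v (f h0)) => [z|]; last by case: f_h0.1; apply/valuation_eq0.
  by case: (v _) => //= z'; left; split => //; apply/eqP.
rewrite -eq_h0m /hahn_add.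
have [eq_h0k0|neq_h0k0] := eqVneq h0 k0; last first.
  have -> : g h0 = 0.
    apply: contrapT => gh0; case/eqP: neq_h0k0.
    exact: anti le_h0k0 (g_k0.2 _ gh0).
  by left; rewrite addr0; apply: ole_refl.
have [_ _ v_ultra] := v_val; rewrite -eq_h0k0.
by case: (v_ultra (f h0) (g h0) I I) => le_v; [left | right]; apply: ole_same_exp.
Qed.

Lemma hahn_val_add f g :
  well_ordered_subset leH (Defs.support f) ->
  well_ordered_subset leH (Defs.support g) ->
  ole (Gbeta_le leG leH) (hahn_val leH v f) (hahn_val leH v (hahn_add f g)) \/
  ole (Gbeta_le leG leH) (hahn_val leH v g) (hahn_val leH v (hahn_add f g)).
Proof.
have [_ _ _ le_total _] := ordH.
move=> wo_f wo_g.
case/well_ordered_support_cases: (wo_f) => [->|[h0 f_h0]].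
  by right; rewrite hahn_add0f; apply: ole_refl.
case/well_ordered_support_cases: (wo_g) => [->|[k0 g_k0]].
  by left; rewrite hahn_addC hahn_add0f; apply: ole_refl.
case: (le_total h0 k0) => [le_h0k0|le_k0h0].
  exact: hahn_val_add_lead_le wo_f wo_g f_h0 g_k0 le_h0k0.
rewrite hahn_addC.
by case: (hahn_val_add_lead_le wo_g wo_f g_k0 f_h0 le_k0h0); [right | left].
Qed.

End Valuation.

End HahnSeries.

Theorem proposition2p2 (G : zmodType) (leG : rel G) (A : pred G)
  (H : zmodType) (rho : G -> H) (alpha : H -> G)
  (K : fieldType) (v : K -> option G) (p : nat) (sigma : G -> K) (D : Type) :
  ordered_abelian_group leG ->
  smallest_nonzero_convex_subgroup leG A ->
  quotient_proj A rho ->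
  transversal_map rho alpha ->
  char0 K ->
  valued_field_with_value_group leG A v ->
  residue_char leG v p ->
  cross_section A v sigma ->
  infinite_type D ->
  valuation_on (in_hahn (induced_le leG rho) D) (@hahn_zero H K)
    (@hahn_add H K) (hahn_mul (cocycle alpha) sigma)
    (Gbeta_add (cocycle alpha)) (Gbeta_le leG (induced_le leG rho))
    (hahn_val (induced_le leG rho) v).
Proof.
move=> ordG [[subA convexA _] _] rhoA alpha_tr _ [v_val _ _] _ sigma_cs _.
have ordH := induced_le_ordered ordG subA.1 convexA rhoA.
have [leG_refl _ _ _ _] := ordG.
have beta_A h h' := cocycle_in_kernel h h' rhoA alpha_tr.
split=> [f [wo_f _] | f g [wo_f _] [wo_g _] | f g [wo_f _] [wo_g _]].
- exact: (hahn_val_eq_None ordH v_val wo_f).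
- exact: (hahn_val_mul ordH v_val subA beta_A sigma_cs wo_f wo_g).
- exact: (hahn_val_add ordH v_val leG_refl wo_f wo_g).
Qed.
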